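(* Let $\mathcal{F}=\widetilde{M}$ be an indecomposable coherent sheaf on $\mathbb{A}^1=\operatorname{MSpec}(\langle t\rangle)$, and let $U=\operatorname{MSpec}(\langle t,t^{-1}\rangle)\subset\mathbb{A}^1$ be the open subset where $t$ is invertible. Then: (1) if $\Gamma_M$ is of type 1, $\mathcal{F}|_U\cong 0$; (2) if $\Gamma_M$ is of type 2, $\mathcal{F}|_U\cong\mathcal{L}$; (3) if $\Gamma_M$ is of type 3 with oriented cycle of length $k$, $\mathcal{F}|_U\cong\mathcal{C}_k$.
   Context: $\langle t\rangle=\{0,1,t,t^2,\dots\}$ and $\langle t,t^{-1}\rangle=\{0\}\cup\{t^n:n\in\mathbb Z\}$. A module over such a monoid is a pointed set $(M,* )$ with an action satisfying $1m=m$, $a(bm)=(ab)m$, $0m=*$. Coherent sheaves on $\mathbb A^1$ are $\widetilde M$ with $M$ a finitely generated $\langle t\rangle$-module, and the restriction of $\widetilde M$ to $U$ is $\widetilde{M_t}$, where $M_t$ is the localization at powers of $t$. $\mathcal F$ indecomposable means non-zero and not a direct sum (wedge sum) of two non-zero coherent sheaves. The graph $\Gamma_M$ has vertex set $M\setminus\{*\}$ and an edge $m\to tm$ whenever $tm\ne *$. $\Gamma_M$ is of type 1 if it is a rooted tree (underlying undirected graph a tree with a unique root, i.e. vertex without outgoing edge, reached by a directed path from every vertex); of type 2 if obtained from a finite rooted tree by joining its root to the initial vertex of an infinite directed ray $v_0\to v_1\to\cdots$; of type 3 if obtained from an oriented directed cycle by attaching rooted trees to it. $\mathcal{L}=\widetilde{\langle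 t,t^{-1}\rangle}$ and $\mathcal{C}_k=\widetilde{C_k}$ where $C_k=\{*,1,t,\dots,t^{k-1}\}$ with $t$ acting by the cyclic permutation $1\mapsto t\mapsto\cdots\mapsto t^{k-1}\mapsto1$. *)

From Stdlib Require Import Arith ZArith List Lia Relations Eqdep_dec Bool.
Import ListNotations.

(** The monoid <t> = {0,1,t,t^2,...}: [None] is 0, [Some n] is t^n. *)
Definition tmon := option nat.
Definition tmul (a b : tmon) : tmon :=
  match a, b with Some n, Some m => Some (n + m) | _, _ => None end.

(** The monoid <t,t^-1> = {0} U {t^n : n in Z}: [None] is 0, [Some z] is t^z. *)
Definition tpmon := option Z.
Definition tpmul (a b : tpmon) : tpmon :=
  match a, b with Some n, Some m => Some (n + m)%Z | _, _ => None end.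

Record tModule := {
  tcar :> Type;
  tpt : tcar;
  tact : tmon -> tcar -> tcar;
  tact1 : forall m, tact (Some 0) m = m;
  tactM : forall a b m, tact a (tact b m) = tact (tmul a b) m;
  tact0 : forall m, tact None m = tpt }.

Record tpModule := {
  tpcar :> Type;
  tppt : tpcar;
  tpact : tpmon -> tpcar -> tpcar;
  tpact1 : forall m, tpact (Some 0%Z) m = m;
  tpactM : forall a b m, tpact a (tpact b m) = tpact (tpmul a b) m;
  tpact0 : forall m, tpact None m = tppt }.

Section ModDefs.
Variable M : tModule.

Definition tshift (m : M) : M := tact M (Some 1) m.

Definition fin_gen : Prop :=
  exists s : list M, forall m : M, exists g a, In g s /\ m = tact M a g.

Definition is_submodule (A : M -> Prop) : Prop :=
  A (tpt M) /\ forall a m, A m -> A (tact M a m).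

Definition decomposable : Prop :=
  exists A B : M -> Prop,
    is_submodule A /\ is_submodule B /\
    (forall m, A m -> B m -> m = tpt M) /\
    (forall m, A m \/ B m) /\
    (exists m, A m /\ m <> tpt M) /\ (exists m, B m /\ m <> tpt M).

Definition indecomposable : Prop :=
  (exists m : M, m <> tpt M) /\ ~ decomposable.

(** ---- The graph Gamma_M: vertices M \ {*}, edges m -> t m when t m <> * ---- *)

Fixpoint chain (R : M -> M -> Prop) (x : M) (l : list M) : Prop :=
  match l with [] => True | y :: l' => R x y /\ chain R y l' end.

(** Subgraph with vertex set S and root r: its edges are u -> t u for u in S,
    u <> r (the root has no outgoing edge in the subgraph). *)
Definition sub_edge (S : M -> Prop) (r u v : M) : Prop :=
  S u /\ u <> r /\ tshift u = v.

Definition sub_uadj (S : M -> Prop) (r u v : M) : Prop :=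
  u <> v /\ (sub_edge S r u v \/ sub_edge S r v u).

Definition undirected_tree (S : M -> Prop) (r : M) : Prop :=
  (forall u v, S u -> S v -> clos_refl_trans M (sub_uadj S r) u v) /\
  (forall v0 l, NoDup (v0 :: l) -> 2 <= length l ->
     chain (sub_uadj S r) v0 l -> sub_uadj S r (last l v0) v0 -> False).

Definition rooted_tree (S : M -> Prop) (r : M) : Prop :=
  S r /\
  (forall u, S u -> u <> tpt M) /\
  (forall u, S u -> u <> r -> S (tshift u)) /\
  (forall u, S u -> exists n, tact M (Some n) u = r /\
                              forall i, i <= n -> S (tact M (Some i) u)) /\
  undirected_tree S r.

Definition gamma_type1 : Prop :=
  exists r, rooted_tree (fun u => u <> tpt M) r /\ tshift r = tpt M.

(** type 2: a finite rooted tree T with root r, joined to the initial vertex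
    of an infinite directed ray v 0 -> v 1 -> ... *)
Definition gamma_type2 : Prop :=
  exists (v : nat -> M) (T : M -> Prop) (r : M),
    (forall i, v i <> tpt M) /\
    (forall i j, v i = v j -> i = j) /\
    (forall i, tshift (v i) = v (S i)) /\
    rooted_tree T r /\
    (exists s : list M, forall u, T u -> In u s) /\
    tshift r = v 0 /\
    (forall u i, T u -> u <> v i) /\
    (forall u, u <> tpt M -> T u \/ exists i, u = v i).

(** type 3 with cycle length k: an oriented cycle c 0 -> ... -> c (k-1) -> c 0
    with rooted trees T j attached at the cycle vertices c j. *)
Definition gamma_type3 (k : nat) : Prop :=
  0 < k /\
  exists (c : nat -> M) (T : nat -> M -> Prop),
    (forall i, i < k -> c i <> tpt M) /\
    (forall i j, i < k -> j < k -> c i = c j -> i = j) /\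
    (forall i, i < k -> tshift (c i) = c (S i mod k)) /\
    (forall j, j < k -> rooted_tree (T j) (c j)) /\
    (forall i j u, i < k -> j < k -> T i u -> T j u -> i = j) /\
    (forall i j, i < k -> j < k -> T j (c i) -> i = j) /\
    (forall u, u <> tpt M -> exists j, j < k /\ T j u).

(** ---- Localization M_t: pairs (m, n) standing for m / t^n ---- *)
Definition loc_eq (x y : M * nat) : Prop :=
  exists a, tact M (Some (a + snd y)) (fst x) = tact M (Some (a + snd x)) (fst y).

Definition loc_act (z : tpmon) (x : M * nat) : M * nat :=
  match z with
  | None => (tpt M, 0)
  | Some z => if (0 <=? z)%Z then (tact M (Some (Z.to_nat z)) (fst x), snd x)
              else (fst x, snd x + Z.to_nat (- z))
  end.

(** M_t (the quotient of M * nat by loc_eq, with action loc_act) is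
    isomorphic to the <t,t^-1>-module N: there is a map out of M * nat whose
    fibres are exactly the loc_eq-classes, which is onto and equivariant. *)
Definition loc_iso (N : tpModule) : Prop :=
  exists phi : M * nat -> N,
    (forall x y, phi x = phi y <-> loc_eq x y) /\
    (forall y, exists x, phi x = y) /\
    (forall a x, phi (loc_act a x) = tpact N a (phi x)).

End ModDefs.

Definition zeroMod : tpModule.
Proof.
  refine {| tpcar := unit; tppt := Datatypes.tt; tpact := fun _ _ => Datatypes.tt |}.
  - intros []; reflexivity.
  - reflexivity.
  - reflexivity.
Defined.

(** L-tilde: <t,t^-1> acting on itself; [Some n] is t^n, [None] is 0 *)
Definition Lact (a : tpmon) (m : option Z) : option Z := tpmul a m.

Definition LMod : tpModule.
Proof.
  refine {| tpcar := option Z; tppt := None; tpact := Lact |}.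
  - intros [m|]; simpl; reflexivity.
  - intros [a|] [b|] [m|]; simpl; try reflexivity. f_equal; lia.
  - reflexivity.
Defined.

(** C_k = {*, 1, t, ..., t^(k-1)}, t acting by cyclic permutation;
    [Some i] is t^i (i < k). *)
Definition ck_idx (k : nat) := { i : nat | (i <? k) = true }.

Lemma ck_mod_lt (k n : nat) (z : Z) :
  (n <? k) = true -> (Z.to_nat ((Z.of_nat n + z) mod Z.of_nat k) <? k) = true.
Proof.
  intro H. apply Nat.ltb_lt in H. apply Nat.ltb_lt.
  assert (Hk : (0 < Z.of_nat k)%Z) by lia.
  pose proof (Z.mod_pos_bound (Z.of_nat n + z) (Z.of_nat k) Hk). lia.
Qed.

Definition ck_shift (k : nat) (z : Z) (i : ck_idx k) : ck_idx k :=
  exist _ (Z.to_nat ((Z.of_nat (proj1_sig i) + z) mod Z.of_nat k))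
        (ck_mod_lt k (proj1_sig i) z (proj2_sig i)).

Definition Cact (k : nat) (a : tpmon) (m : option (ck_idx k)) : option (ck_idx k) :=
  match a, m with Some z, Some i => Some (ck_shift k z i) | _, _ => None end.

Lemma ck_eq (k : nat) (i j : ck_idx k) : proj1_sig i = proj1_sig j -> i = j.
Proof.
  destruct i as [i Hi], j as [j Hj]; simpl; intros ->.
  f_equal. apply UIP_dec. exact bool_dec.
Qed.

Definition CMod (k : nat) : tpModule.
Proof.
  refine {| tpcar := option (ck_idx k); tppt := None; tpact := Cact k |}.
  - intros [[i Hi]|]; simpl; [|reflexivity]. f_equal. apply ck_eq; simpl.
    apply Nat.ltb_lt in Hi. rewrite Z.add_0_r, Z.mod_small by lia. lia.
  - intros [a|] [b|] [[i Hi]|]; simpl; try reflexivity. f_equal. apply ck_eq; simpl.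
    apply Nat.ltb_lt in Hi.
    assert (Hk : (0 < Z.of_nat k)%Z) by lia.
    pose proof (Z.mod_pos_bound (Z.of_nat i + b) (Z.of_nat k) Hk).
    rewrite Z2Nat.id by lia. rewrite Z.add_mod_idemp_l by lia. f_equal. f_equal. lia.
  - reflexivity.
Defined.

From Stdlib Require Import Arith ZArith List.
From Stdlib Require Import Lia Classical ClassicalEpsilon.

(* In each case every nonzero element is pushed by a power of
   t onto a "core" (nothing for type 1, the ray for type 2, the cycle for
   type 3) on which t acts injectively, resp. periodically with period k.
   After inverting t an element m / t^n is then determined by its phase
   i - n in Z (resp. Z/k), where t^n m is the i-th core vertex, and this
   phase identifies M_t with 0, L or C_k. *)

Section TModuleFacts.
Variable M : tModule.

Lemma tact_pt a : tact M a (tpt M) = tpt M.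
Proof.
  rewrite <- (tact0 M (tpt M)) at 1. rewrite tactM.
  destruct a; apply tact0.
Qed.

Lemma tact_add i j (m : M) :
  tact M (Some i) (tact M (Some j) m) = tact M (Some (i + j)) m.
Proof. apply tactM. Qed.

Lemma tshift_tact j (m : M) : tshift M (tact M (Some j) m) = tact M (Some (S j)) m.
Proof. apply tactM. Qed.

End TModuleFacts.

Section TpModuleFacts.
Variable N : tpModule.

Lemma tpact_pt a : tpact N a (tppt N) = tppt N.
Proof.
  rewrite <- (tpact0 N (tppt N)) at 1. rewrite tpactM.
  destruct a; apply tpact0.
Qed.

Lemma tpact_add a b (x : N) :
  tpact N (Some a) (tpact N (Some b) x) = tpact N (Some (a + b)%Z) x.
Proof. apply tpactM. Qed.

Lemma tpact_shift_eq a b z (x y : N) :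
  tpact N (Some a) x = tpact N (Some b) y ->
  tpact N (Some (z + a)%Z) x = tpact N (Some (z + b)%Z) y.
Proof. intro E. rewrite <- !tpact_add, E. reflexivity. Qed.

Lemma tpact_exp_eq a b (x : N) : a = b -> tpact N (Some a) x = tpact N (Some b) x.
Proof. intros ->; reflexivity. Qed.

Lemma tpact_cancel z (x y : N) : tpact N (Some z) x = tpact N (Some z) y -> x = y.
Proof.
  intro E. apply (tpact_shift_eq _ _ (- z)) in E.
  rewrite Z.add_opp_diag_l, !tpact1 in E. exact E.
Qed.

Lemma tpact_cross (n n' : nat) (u u' : N) :
  tpact N (Some (- Z.of_nat n)%Z) u = tpact N (Some (- Z.of_nat n')%Z) u' <->
  tpact N (Some (Z.of_nat n')) u = tpact N (Some (Z.of_nat n)) u'.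
Proof.
  split; intro E.
  - apply (tpact_shift_eq _ _ (Z.of_nat n + Z.of_nat n')) in E.
    replace (Z.of_nat n + Z.of_nat n' + - Z.of_nat n)%Z with (Z.of_nat n') in E by lia.
    replace (Z.of_nat n + Z.of_nat n' + - Z.of_nat n')%Z with (Z.of_nat n) in E by lia.
    exact E.
  - apply (tpact_shift_eq _ _ (- (Z.of_nat n + Z.of_nat n'))) in E.
    replace (- (Z.of_nat n + Z.of_nat n') + Z.of_nat n')%Z with (- Z.of_nat n)%Z in E by lia.
    replace (- (Z.of_nat n + Z.of_nat n') + Z.of_nat n)%Z with (- Z.of_nat n')%Z in E by lia.
    exact E.
Qed.

End TpModuleFacts.

Lemma loc_iso_intro (M : tModule) (N : tpModule) (psi : M -> N) :
  psi (tpt M) = tppt N ->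
  (forall j m, psi (tact M (Some j) m) = tpact N (Some (Z.of_nat j)) (psi m)) ->
  (forall x y, psi x = psi y -> exists a, tact M (Some a) x = tact M (Some a) y) ->
  (forall y, exists m n, y = tpact N (Some (- Z.of_nat n)%Z) (psi m)) ->
  loc_iso M N.
Proof.
  intros psi_pt psi_tact psi_fibre psi_gen.
  exists (fun x => tpact N (Some (- Z.of_nat (snd x))%Z) (psi (fst x))).
  split; [|split].
  - intros [m n] [m' n']; simpl. rewrite tpact_cross, <- !psi_tact. split.
    + intro E. destruct (psi_fibre _ _ E) as [a Ha].
      exists a. rewrite !tact_add in Ha. exact Ha.
    + intros [a Ha]. simpl in Ha. rewrite <- !tact_add in Ha.
      apply (f_equal psi) in Ha. rewrite !(psi_tact a) in Ha.
      exact (tpact_cancel _ _ _ _ Ha).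
  - intro y. destruct (psi_gen y) as [m [n E]]. exists (m, n). symmetry; exact E.
  - intros [z|] [m n]; simpl.
    + destruct (0 <=? z)%Z eqn:Ez; simpl.
      * apply Z.leb_le in Ez. rewrite psi_tact, !tpact_add.
        apply tpact_exp_eq. lia.
      * apply Z.leb_gt in Ez. rewrite tpact_add. apply tpact_exp_eq. lia.
    + rewrite psi_pt, tpact_pt, tpact0. reflexivity.
Qed.

Lemma loc_iso_zero_of_nilpotent (M : tModule) :
  (forall m : M, exists a, tact M (Some a) m = tpt M) -> loc_iso M zeroMod.
Proof.
  intro nil.
  apply (loc_iso_intro M zeroMod (fun _ => Datatypes.tt)); try reflexivity.
  - intros x y _. destruct (nil x) as [a Ha], (nil y) as [b Hb].
    exists (b + a).
    rewrite <- (tact_add M b a), Ha, (Nat.add_comm b a), <- (tact_add M a b), Hb.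
    rewrite !tact_pt. reflexivity.
  - intros []. exists (tpt M), 0. reflexivity.
Qed.

Lemma rooted_tree_reaches_root (M : tModule) (S : M -> Prop) r u :
  rooted_tree M S r -> S u -> exists n, tact M (Some n) u = r.
Proof.
  intros [_ [_ [_ [reach _]]]] Su.
  destruct (reach u Su) as [n [Hn _]]. exists n. exact Hn.
Qed.

Lemma gamma_type1_nilpotent (M : tModule) :
  gamma_type1 M -> forall m : M, exists a, tact M (Some a) m = tpt M.
Proof.
  intros [r [tree tr]] m.
  destruct (classic (m = tpt M)) as [->|Hm].
  - exists 0. apply tact1.
  - destruct (rooted_tree_reaches_root M _ r m tree Hm) as [n Hn].
    exists (S n). rewrite <- tshift_tact, Hn. exact tr.
Qed.

(* p = 0 encodes a free orbit: Z.modulo by 0 is the identity. *)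
Record periodic_orbit (N : tpModule) (g : N) (p : Z) : Prop := {
  orbit_nonzero : forall z, tpact N (Some z) g <> tppt N;
  orbit_eq : forall z z',
    tpact N (Some z) g = tpact N (Some z') g <-> (z mod p = z' mod p)%Z;
  orbit_cover : forall y, y = tppt N \/ exists z, y = tpact N (Some z) g }.

Lemma LMod_periodic_orbit : periodic_orbit LMod (Some 0%Z) 0.
Proof.
  split.
  - discriminate.
  - intros z z'. rewrite !Zmod_0_r. simpl. split.
    + intro E. injection E. lia.
    + intros ->. reflexivity.
  - intros [z|]; [right; exists z; simpl; f_equal; lia | left; reflexivity].
Qed.

Definition ck_zero (k : nat) (k_gt0 : 0 < k) : ck_idx k :=
  exist _ 0 (proj2 (Nat.ltb_lt 0 k) k_gt0).

Lemma CMod_periodic_orbit (k : nat) (k_gt0 : 0 < k) :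
  periodic_orbit (CMod k) (Some (ck_zero k k_gt0)) (Z.of_nat k).
Proof.
  assert (kZ : (0 < Z.of_nat k)%Z) by lia.
  split.
  - discriminate.
  - intros z z'. simpl. split.
    + intro E. injection E as E.
      apply Z2Nat.inj in E; try (apply Z.mod_pos_bound; lia). exact E.
    + intro E. f_equal. apply ck_eq. simpl. rewrite E. reflexivity.
  - intros [[i Hi]|]; [right | left; reflexivity].
    assert (i_lt : i < k) by (apply Nat.ltb_lt; exact Hi).
    exists (Z.of_nat i). simpl. f_equal. apply ck_eq. simpl.
    rewrite Z.mod_small by lia. lia.
Qed.

Section Phase.
Variables (M : tModule) (p : Z) (c : nat -> M).
Hypothesis core_shift : forall i, tshift M (c i) = c (S i).
Hypothesis core_eq : forall i j, c i = c j <-> (Z.of_nat i mod p = Z.of_nat j mod p)%Z.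
Hypothesis core_nonzero : forall i, c i <> tpt M.
Hypothesis core_reach : forall m, m <> tpt M -> exists n i, tact M (Some n) m = c i.

Lemma core_tact l i : tact M (Some l) (c i) = c (i + l).
Proof.
  induction l as [|l IH].
  - rewrite tact1, Nat.add_0_r. reflexivity.
  - rewrite <- tshift_tact, IH, core_shift. f_equal. lia.
Qed.

Lemma tact_nonzero l m : m <> tpt M -> tact M (Some l) m <> tpt M.
Proof.
  intros Hm E. destruct (core_reach m Hm) as [n [i Hn]].
  destruct (Nat.le_gt_cases l n).
  - apply (core_nonzero i). rewrite <- Hn.
    replace n with (n - l + l) by lia.
    rewrite <- tact_add, E. apply tact_pt.
  - apply (core_nonzero (i + (l - n))).
    rewrite <- core_tact, <- Hn, tact_add.
    replace (l - n + n) with l by lia. exact E.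
Qed.

Definition phase (m : M) : Z :=
  let ni := epsilon (inhabits (0, 0))
              (fun ni => tact M (Some (fst ni)) m = c (snd ni)) in
  ((Z.of_nat (snd ni) - Z.of_nat (fst ni)) mod p)%Z.

Lemma phase_spec m n i :
  tact M (Some n) m = c i -> phase m = ((Z.of_nat i - Z.of_nat n) mod p)%Z.
Proof.
  intro Hn. unfold phase.
  pose proof (epsilon_spec (inhabits (0, 0))
              (fun ni => tact M (Some (fst ni)) m = c (snd ni))
              (ex_intro _ (n, i) Hn)) as Hn'.
  destruct (epsilon _ _) as [n' i']. simpl in *.
  assert (E : c (i' + n) = c (i + n')).
  { rewrite <- !core_tact, <- Hn, <- Hn', !tact_add, Nat.add_comm. reflexivity. }
  apply core_eq in E. rewrite !Nat2Z.inj_add in E.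
  replace (Z.of_nat i' - Z.of_nat n')%Z
    with (Z.of_nat i' + Z.of_nat n - (Z.of_nat n + Z.of_nat n'))%Z by lia.
  replace (Z.of_nat i - Z.of_nat n)%Z
    with (Z.of_nat i + Z.of_nat n' - (Z.of_nat n + Z.of_nat n'))%Z by lia.
  rewrite <- Zminus_mod_idemp_l, E, Zminus_mod_idemp_l. reflexivity.
Qed.

Lemma phase_mod m : (phase m mod p)%Z = phase m.
Proof. apply Zmod_mod. Qed.

Lemma phase_core i : phase (c i) = (Z.of_nat i mod p)%Z.
Proof. rewrite (phase_spec _ 0 i) by apply tact1. f_equal. lia. Qed.

Lemma phase_tact l m :
  m <> tpt M -> phase (tact M (Some l) m) = ((phase m + Z.of_nat l) mod p)%Z.
Proof.
  intro Hm. destruct (core_reach m Hm) as [n [i Hn]].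
  rewrite (phase_spec m n i Hn), Zplus_mod_idemp_l.
  rewrite (phase_spec _ n (i + l)).
  - f_equal. lia.
  - rewrite tact_add, Nat.add_comm, <- tact_add, Hn. apply core_tact.
Qed.

Lemma phase_fibre x y :
  x <> tpt M -> y <> tpt M -> phase x = phase y ->
  exists a, tact M (Some a) x = tact M (Some a) y.
Proof.
  intros Hx Hy E.
  destruct (core_reach x Hx) as [nx [ix Hnx]], (core_reach y Hy) as [ny [iy Hny]].
  rewrite (phase_spec _ _ _ Hnx), (phase_spec _ _ _ Hny) in E.
  exists (nx + ny).
  rewrite (Nat.add_comm nx ny) at 1. rewrite <- (tact_add M ny nx), <- (tact_add M nx ny).
  rewrite Hnx, Hny, !core_tact. apply core_eq.
  rewrite !Nat2Z.inj_add.
  replace (Z.of_nat ix + Z.of_nat ny)%Z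
    with (Z.of_nat ix - Z.of_nat nx + (Z.of_nat nx + Z.of_nat ny))%Z by lia.
  replace (Z.of_nat iy + Z.of_nat nx)%Z
    with (Z.of_nat iy - Z.of_nat ny + (Z.of_nat nx + Z.of_nat ny))%Z by lia.
  rewrite <- Zplus_mod_idemp_l, E, Zplus_mod_idemp_l. reflexivity.
Qed.

Variables (N : tpModule) (g : N).
Hypothesis N_orbit : periodic_orbit N g p.

Definition phase_map (m : M) : N :=
  if excluded_middle_informative (m = tpt M) then tppt N
  else tpact N (Some (phase m)) g.

Lemma phase_map_nonzero m : m <> tpt M -> phase_map m = tpact N (Some (phase m)) g.
Proof.
  intro Hm. unfold phase_map.
  destruct (excluded_middle_informative _); [contradiction | reflexivity].
Qed.

Lemma phase_map_pt : phase_map (tpt M) = tppt N.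
Proof.
  unfold phase_map. destruct (excluded_middle_informative _); [reflexivity | contradiction].
Qed.

Lemma orbit_mod z : tpact N (Some (z mod p)%Z) g = tpact N (Some z) g.
Proof. apply (orbit_eq _ _ _ N_orbit). apply Zmod_mod. Qed.

Lemma phase_map_core i : phase_map (c i) = tpact N (Some (Z.of_nat i)) g.
Proof. rewrite phase_map_nonzero, phase_core by apply core_nonzero. apply orbit_mod. Qed.

Theorem loc_iso_of_core : loc_iso M N.
Proof.
  apply (loc_iso_intro M N phase_map).
  - exact phase_map_pt.
  - intros j m. destruct (classic (m = tpt M)) as [->|Hm].
    + rewrite tact_pt, phase_map_pt, tpact_pt. reflexivity.
    + rewrite !phase_map_nonzero by auto using tact_nonzero.
      rewrite phase_tact, orbit_mod, tpact_add, Z.add_comm by exact Hm. reflexivity.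
  - intros x y. destruct (classic (x = tpt M)) as [->|Hx], (classic (y = tpt M)) as [->|Hy].
    + exists 0. reflexivity.
    + rewrite phase_map_pt, phase_map_nonzero by exact Hy.
      intro E. symmetry in E. contradiction (orbit_nonzero _ _ _ N_orbit _ E).
    + rewrite phase_map_pt, phase_map_nonzero by exact Hx.
      intro E. contradiction (orbit_nonzero _ _ _ N_orbit _ E).
    + rewrite !phase_map_nonzero by assumption.
      intro E. apply (orbit_eq _ _ _ N_orbit) in E. rewrite !phase_mod in E.
      exact (phase_fibre x y Hx Hy E).
  - intro y. destruct (orbit_cover _ _ _ N_orbit y) as [->|[z ->]].
    + exists (tpt M), 0. rewrite phase_map_pt, tpact_pt. reflexivity.
    + exists (c (Z.to_nat z)), (Z.to_nat (- z)).
      rewrite phase_map_core, tpact_add.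
      apply tpact_exp_eq. lia.
Qed.

End Phase.

Lemma gamma_type2_loc_iso (M : tModule) : gamma_type2 M -> loc_iso M LMod.
Proof.
  intros [v [T [r [v_nonzero [v_inj [v_shift [tree [_ [r_shift [_ cover]]]]]]]]]].
  refine (loc_iso_of_core M 0 v v_shift _ v_nonzero _ LMod _ LMod_periodic_orbit).
  - intros i j. rewrite !Zmod_0_r. split.
    + intros E. rewrite (v_inj i j E). reflexivity.
    + intros E. apply Nat2Z.inj in E. rewrite E. reflexivity.
  - intros m Hm. destruct (cover m Hm) as [Tm | [i ->]].
    + destruct (rooted_tree_reaches_root M T r m tree Tm) as [n Hn].
      exists (S n), 0. rewrite <- tshift_tact, Hn. exact r_shift.
    + exists 0, i. apply tact1.
Qed.

Lemma gamma_type3_loc_iso (M : tModule) (k : nat) :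
  gamma_type3 M k -> loc_iso M (CMod k).
Proof.
  intros [k_gt0 [c [T [c_nonzero [c_inj [c_shift [trees [_ [_ cover]]]]]]]]].
  assert (mod_lt : forall i, i mod k < k) by (intro i; apply Nat.mod_upper_bound; lia).
  refine (loc_iso_of_core M (Z.of_nat k) (fun i => c (i mod k)) _ _
            (fun i => c_nonzero _ (mod_lt i)) _ _ _ (CMod_periodic_orbit k k_gt0)).
  - intro i. rewrite c_shift by apply mod_lt.
    rewrite <- (Nat.add_1_r (i mod k)), <- (Nat.add_1_r i), Nat.Div0.add_mod_idemp_l.
    reflexivity.
  - intros i j. rewrite <- !Nat2Z.inj_mod. split.
    + intros E. rewrite (c_inj _ _ (mod_lt i) (mod_lt j) E). reflexivity.
    + intros E. apply Nat2Z.inj in E. rewrite E. reflexivity.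
  - intros m Hm. destruct (cover m Hm) as [j [j_lt Tm]].
    destruct (rooted_tree_reaches_root M (T j) (c j) m (trees j j_lt) Tm) as [n Hn].
    exists n, j. rewrite Nat.mod_small by exact j_lt. exact Hn.
Qed.

Theorem mainTheorem11 (M : tModule) :
  fin_gen M -> indecomposable M ->
  (gamma_type1 M -> loc_iso M zeroMod) /\
  (gamma_type2 M -> loc_iso M LMod) /\
  (forall k : nat, gamma_type3 M k -> loc_iso M (CMod k)).
Proof.
  intros _ _. split; [|split].
  - intro type1. apply loc_iso_zero_of_nilpotent, gamma_type1_nilpotent, type1.
  - apply gamma_type2_loc_iso.
  - apply gamma_type3_loc_iso.
Qed.
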